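(* Let $X$ be a compact metric space and $(f_n)_{n\ge1}$ a sequence of continuous maps $X\to X$ converging uniformly to a function $\phi\colon X\to X$. If $p\in\mathbb{N}^*$ is an idempotent ($p+p=p$), then $\phi^p\circ f_1^{q+p}=f_1^{q+p+p}=f_1^{q+p}$ for all $q\in\mathbb{N}^*$; that is, $f_1^{q+p}(x)$ is a fixed point of $\phi^p$ for every $q\in\mathbb{N}^*$ and every $x\in X$.
   Context: $\mathbb{N}=\{1,2,\dots\}$, $\mathbb{N}^*$ the free ultrafilters on $\mathbb{N}$. For $r\in\mathbb{N}^*$, $r\text{-}\lim_n x_n$ is the unique $y$ with $\{n:x_n\in V\}\in r$ for all neighbourhoods $V$ of $y$. $f_1^n=f_n\circ\cdots\circ f_1$, $f_1^r(x)=r\text{-}\lim_n f_1^n(x)$; $\phi^n$ is the $n$-fold composition and $\phi^r(x)=r\text{-}\lim_n\phi^n(x)$ for $r\in\mathbb{N}^*$. Addition of ultrafilters: $p+q=\{A:\{n:\{m:m+n\in A\}\in p\}\in q\}$. *)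

From HB Require Import structures.
From mathcomp Require Import all_boot all_order all_algebra.
From mathcomp Require Import all_classical all_reals all_analysis.
Set Implicit Arguments. Unset Strict Implicit. Unset Printing Implicit Defensive.
Import Order.TTheory GRing.Theory Num.Theory.
Local Open Scope classical_set_scope.
Local Open Scope ring_scope.

(* Free ultrafilters on the naturals: ultrafilters containing no finite set.
   (Index 0 is irrelevant: a free ultrafilter never sees a single point.) *)
Definition free_ultrafilter (p : set_system nat) : Prop :=
  UltraFilter p /\ (forall A : set nat, finite_set A -> ~ p A).

Definition usum (p q : set_system nat) : set_system nat :=
  [set A | q [set n | p [set m | A (m + n)%N]]].

Definition is_rlim {X : topologicalType} (r : set_system nat) (u : nat -> X) (y : X) : Prop :=
  forall V, nbhs y V -> r [set n | V (u n)].

(* r-lim_n u_n, chosen with the default x0 (the r-limit exists and is unique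
   in a compact Hausdorff space, so the default is never used there). *)
Definition rlim {X : topologicalType} (x0 : X) (r : set_system nat) (u : nat -> X) : X :=
  xget x0 [set y | is_rlim r u y].

(* f_1^n = f_n o ... o f_1  (f_1^0 = id) *)
Fixpoint fcomp {X : Type} (f : nat -> X -> X) (n : nat) : X -> X :=
  match n with
  | 0 => id
  | n'.+1 => f n'.+1 \o fcomp f n'
  end.

Definition fcomp_u {X : topologicalType} (f : nat -> X -> X) (r : set_system nat) (x : X) : X :=
  rlim x r (fun n => fcomp f n x).

Definition iter_u {X : topologicalType} (phi : X -> X) (r : set_system nat) (x : X) : X :=
  rlim x r (fun n => iter n phi x).

From HB Require Import structures.
From mathcomp Require Import all_boot all_order all_algebra.
From mathcomp Require Import all_classical all_reals all_analysis.
From mathcomp Require Import lra.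
Import Order.TTheory GRing.Theory Num.Theory.
Local Open Scope classical_set_scope.
Local Open Scope ring_scope.

(* Ultrafilter limits along [q + p] are iterated limits: the [(q + p)]-limit of
   [f_1^n(x)] is the [p]-limit over [n] of the [q]-limits over [m] of
   [f_1^(m + n)(x)].  Since [f_m] converges uniformly to the continuous map
   [phi], the inner limit is [phi^n (f_1^q(x))], whence
   [f_1^(q + p) = phi^p o f_1^q]; for constant [f_n = phi] this says that
   [r |-> phi^r] turns ultrafilter sums into compositions.  With [p + p = p]
   and associativity of the sum,
   [phi^p (f_1^(q + p) x) = phi^(p + p) (f_1^q x) = f_1^(q + p) x = f_1^(q + p + p) x]. *)

(* Enough for uniqueness of [r]-limits, and obviously stable under [usum],
   which spares us proving that [usum] of ultrafilters is a filter. *)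
Definition intersecting {T : Type} (F : set_system T) :=
  forall A B, F A -> F B -> exists t, A t /\ B t.

Lemma ultra_intersecting {T : Type} {F : set_system T} :
  UltraFilter F -> intersecting F.
Proof.
move=> FU A B FA FB.
have /filter_ex [t [At Bt]] : F (A `&` B) by apply: filterI.
by exists t.
Qed.

Lemma usum_intersecting (r s : set_system nat) :
  intersecting r -> intersecting s -> intersecting (usum r s).
Proof.
move=> rI sI A B rA rB; have [n [An Bn]] := sI _ _ rA rB.
by have [m [? ?]] := rI _ _ An Bn; exists (m + n)%N.
Qed.

Lemma usumA (q p r : set_system nat) : usum (usum q p) r = usum q (usum p r).
Proof.
rewrite /usum; apply/funext => A /=; congr (r _); apply/funext => n /=.
congr (p _); apply/funext => m /=; congr (q _); apply/funext => k /=.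
by rewrite addnA.
Qed.

Lemma free_ultrafilter_ge {r : set_system nat} N :
  free_ultrafilter r -> r [set m | (N <= m)%N].
Proof.
move=> [rU rfree]; case: (in_ultra_setVsetC [set m | (N <= m)%N] rU) => // rlt.
exfalso; apply: (rfree _ _ rlt); apply: (sub_finite_set _ (finite_II N)).
by move=> m /=; rewrite ltnNge => /negP.
Qed.

Lemma fmap_ultra {T U : Type} (u : T -> U) {F : set_system T} :
  UltraFilter F -> UltraFilter (u @ F).
Proof.
move=> FU; split; first exact: fmap_proper_filter.
move=> G PG uFG; rewrite predeqE => A; split; last exact: uFG.
move=> GA; case: (in_ultra_setVsetC (u @^-1` A) FU) => // FnA.
have GnA : G (~` A) by exact: uFG.
by have /filter_ex [? []] : G (A `&` ~` A) by exact: filterI.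
Qed.

Section ultrafilter_limits.
Context {R : realType} {X : metricType R}.

Lemma is_rlim_unique (F : set_system nat) (u : nat -> X) y1 y2 :
  intersecting F -> is_rlim F u y1 -> is_rlim F u y2 -> y1 = y2.
Proof.
move=> FI u_y1 u_y2; apply: (@metric_hausdorff R X) => A B y1A y2B.
by have [n [? ?]] := FI _ _ (u_y1 _ y1A) (u_y2 _ y2B); exists (u n).
Qed.

Lemma rlimE x0 {F : set_system nat} {u : nat -> X} {y : X} :
  intersecting F -> is_rlim F u y -> rlim x0 F u = y.
Proof.
move=> FI u_y; apply: xget_unique => // y' u_y'; exact: is_rlim_unique FI u_y' u_y.
Qed.

Lemma compact_is_rlim {F : set_system nat} (u : nat -> X) :
  compact [set: X] -> UltraFilter F -> exists y, is_rlim F u y.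
Proof.
rewrite compact_ultra => cX FU.
by have [y [_ u_y]] := cX _ (fmap_ultra u FU) filterT; exists y.
Qed.

Lemma is_rlim_usum (r s : set_system nat) (u v : nat -> X) y :
  Filter r -> Filter s ->
  (forall n, is_rlim r (fun m => u (m + n)%N) (v n)) -> is_rlim s v y ->
  is_rlim (usum r s) u y.
Proof.
move=> Fr Fs u_v v_y V /nbhs_ballP [e e0 yeV].
have e2 : 0 < e / 2 by rewrite divr_gt0.
apply: filterS (v_y _ (nbhsx_ballx y _ e2)) => n yvn.
apply: filterS (u_v n _ (nbhsx_ballx (v n) _ e2)) => m vnu.
by apply: yeV; rewrite /= (splitr e); exact: ball_triangle yvn vnu.
Qed.

End ultrafilter_limits.

Section uniform_limit.
Context {R : realType} {X : metricType R} {f : nat -> X -> X} {phi : X -> X}.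

Hypothesis f_unif : forall e : R, 0 < e -> exists N : nat,
  forall n : nat, (N <= n)%N -> forall x : X, ball (phi x) e (f n x).

Lemma uniform_limit_continuous_ball :
  (forall n : nat, (0 < n)%N -> continuous (f n)) -> continuous phi.
Proof.
move=> f_cont a V /nbhs_ballP [e e0 phiaeV]; apply/nbhs_ballP.
have e3 : 0 < e / 3 by rewrite divr_gt0.
have [N fN_phi] := f_unif _ e3.
have /nbhs_ballP [d d0 fN_cont] :=
  f_cont N.+1 isT a _ (nbhsx_ballx (f N.+1 a) _ e3).
exists d => // w aw; apply: phiaeV.
have phi_fa := fN_phi N.+1 (leqnSn N) a.
have fw_phi := ball_sym (fN_phi N.+1 (leqnSn N) w).
have := ball_triangle (ball_triangle phi_fa (fN_cont w aw)) fw_phi.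
by apply: le_ball; rewrite -!mulrDr -[e in _ <= e]mulr1 ler_pM2l //; lra.
Qed.

Hypothesis (compactX : compact [set: X]) (phi_cont : continuous phi).

Lemma is_rlim_fcomp_shift (r : set_system nat) (x z : X) n :
  free_ultrafilter r -> is_rlim r (fun m => fcomp f m x) z ->
  is_rlim r (fun m => fcomp f (m + n) x) (iter n phi z).
Proof.
move=> rF fx_z; have rU := rF.1; elim: n => [|n IH].
  by under [fun m => _]funext => m do rewrite addn0.
move=> V /nbhs_ballP [e e0 eV] /=.
have e2 : 0 < e / 2 by rewrite divr_gt0.
have /nbhs_ballP [d d0 phi_d] := phi_cont (iter n phi z) _ (nbhsx_ballx _ _ e2).
have [N fN_phi] := f_unif _ e2.
apply: filterS (filterI (free_ultrafilter_ge N rF) (IH _ (nbhsx_ballx _ _ d0))).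
move=> m [Nm dm] /=; rewrite addnS /=; apply: eV; rewrite /= (splitr e).
apply: ball_triangle (phi_d _ dm) (fN_phi _ _ _).
by rewrite (leq_trans Nm) // -addnS leq_addr.
Qed.

Lemma fcomp_u_usum (r s : set_system nat) (x : X) :
  free_ultrafilter r -> free_ultrafilter s ->
  fcomp_u f (usum r s) x = iter_u phi s (fcomp_u f r x).
Proof.
move=> rF sF; have [rU _] := rF; have [sU _] := sF.
have rI := ultra_intersecting rU; have sI := ultra_intersecting sU.
have [z fx_z] := compact_is_rlim (fun m => fcomp f m x) compactX rU.
have [y phiz_y] := compact_is_rlim (fun n => iter n phi z) compactX sU.
rewrite /iter_u /fcomp_u (rlimE _ rI fx_z) (rlimE _ sI phiz_y).
apply: rlimE; first exact: usum_intersecting.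
apply: (is_rlim_usum r s _ (fun n => iter n phi z)) => // n.
exact: is_rlim_fcomp_shift rF fx_z.
Qed.

End uniform_limit.

Lemma fcomp_u_const {X : topologicalType} (phi : X -> X) r :
  fcomp_u (fun _ => phi) r = iter_u phi r.
Proof.
apply/funext => x; congr rlim; apply/funext => n.
by elim: n => //= n ->.
Qed.

Lemma iter_u_usum {R : realType} {X : metricType R} {phi : X -> X} :
  compact [set: X] -> continuous phi ->
  forall (r s : set_system nat) (x : X),
  free_ultrafilter r -> free_ultrafilter s ->
  iter_u phi (usum r s) x = iter_u phi s (iter_u phi r x).
Proof.
move=> cX phi_cont r s x rF sF.
have const_unif e : 0 < e -> exists N : nat,
    forall n : nat, (N <= n)%N -> forall w : X, ball (phi w) e (phi w).
  by move=> e0; exists 0%N => n _ w; exact: ballxx.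
rewrite -[in LHS]fcomp_u_const -[iter_u phi r]fcomp_u_const.
exact: fcomp_u_usum const_unif cX phi_cont r s x rF sF.
Qed.

Theorem corollary3p13 (R : realType) (X : metricType R)
  (f : nat -> X -> X) (phi : X -> X) :
  compact [set: X] ->
  (forall n : nat, (0 < n)%N -> continuous (f n)) ->
  (forall e : R, 0 < e -> exists N : nat,
      forall n : nat, (N <= n)%N -> forall x : X, ball (phi x) e (f n x)) ->
  forall p : set_system nat, free_ultrafilter p -> usum p p = p ->
  forall q : set_system nat, free_ultrafilter q ->
  forall x : X,
    iter_u phi p (fcomp_u f (usum q p) x) = fcomp_u f (usum (usum q p) p) x /\
    fcomp_u f (usum (usum q p) p) x = fcomp_u f (usum q p) x.
Proof.
move=> cX f_cont f_unif p pF ppp q qF x.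
have phi_cont := uniform_limit_continuous_ball f_unif f_cont.
have qpp : usum (usum q p) p = usum q p by rewrite usumA ppp.
rewrite qpp (fcomp_u_usum f_unif cX phi_cont _ _ _ qF pF).
by rewrite -(iter_u_usum cX phi_cont _ _ _ pF pF) ppp.
Qed.
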